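(* If $G$ is a tropical $\mathfrak{S}$-Gröbner basis of $I=\langle f_1,\dots,f_s\rangle$, then $G$ is a tropical Gröbner basis of $I$ for the tropical term order $\le$, i.e. the monomial ideal generated by $\{LM(g):g\in G\}$ equals $LM(I)$, the monomial ideal generated by $\{LM(f): f\in I\}$.
   Context: Let $k$ be a field with a valuation $val$, $A=k[X_1,\dots,X_n]$, $T$ the set of monomials of $A$, $|f|$ the total degree. Fix $w\in val(k^* )^n$ and a monomial order $\le_1$. Tropical term order: for $a,b\in k^*$, $ax^\alpha<bx^\beta$ if $|x^\alpha|<|x^\beta|$, or equal degrees and $val(a)+w\cdot\alpha>val(b)+w\cdot\beta$, or equal degrees, equal such quantities and $x^\alpha<_1x^\beta$; $ax^\alpha=_{\le}uax^\alpha$ when $val(u)=0$. $LT(f)$ is the largest term of $f$, $LM(f)$ its monomial. Let $f_1,\dots,f_s\in A$ ordered by increasing degree, $I=\langle f_1,\dots,f_s\rangle$, $(e_i)$ the canonical basis of $A^s$. Tame syzygy: $(a_1,\dots,a_s)\in A^s$ with $\sum a_jf_j=0$ and an $i$ with $a_i\neq0$, $a_j=0$ for $j>i$, $|a_jf_j|\le|a_if_i|$ for $j<i$; leading monomial $LM(a_i)e_i$; $LM(TSyz(F))$ is the submodule generated by these. Fix a degree-refining monomial order $\le_m$. Order $\le_{sign}$: $x^\alpha e_i\le_{sign}x^\beta e_j$ if $i<j$; or $i=j$ and $|x^\alpha f_i|<|x^\beta f_i|$; or $i=j$, equal degrees, and either ($x^\alpha e_i\notin LM(TSyz(F))$, $x^\beta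 e_i\in LM(TSyz(F))$), or (both in and $x^\alpha\le_mx^\beta$), or (both not in and $x^\alpha\le_mx^\beta$). $I_{\le_{sign}x^\alpha e_i}=\mathrm{Span}_k\{x^\beta f_j:x^\beta e_j\le_{sign}x^\alpha e_i\}$; the signature $S(f)$ of nonzero $f\in I$ is the smallest $x^\alpha e_i$ with $f\in I_{\le_{sign}x^\alpha e_i}$; $\tau S(g)$ means $\tau x^\alpha e_i$ if $S(g)=x^\alpha e_i$. $e\in I$ $\mathfrak{S}$-reduces to $g$ with $h\in I$ if $e-cth=g$ for some $t\in T,c\in k^*$, with $LT(g)<LT(e)$, $LM(g)\neq LM(e)$, $S(th)<_{sign}S(e)$; $\mathfrak{S}$-irreducible means no $h\in I$ $\mathfrak{S}$-reduces it. A tropical $\mathfrak{S}$-Gröbner basis is a set $G\subset I$ of $\mathfrak{S}$-irreducible polynomials such that every $\mathfrak{S}$-irreducible $h\in I$ has $g\in G$, $t\in T$ with $LM(tg)=LM(h)$ and $tS(g)=S(h)$. *)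

From HB Require Import structures.
From mathcomp Require Import all_boot all_order all_algebra.
From mathcomp Require Import mpoly.
Set Implicit Arguments. Unset Strict Implicit. Unset Printing Implicit Defensive.
Import Order.TTheory GRing.Theory Num.Theory.
Local Open Scope ring_scope.

(* val : k -> R with R a real (ordered) domain; the value at 0 is irrelevant. *)
Definition is_valuation (K : fieldType) (R : realDomainType) (val : K -> R) :=
  (forall a b : K, a != 0 -> b != 0 -> val (a * b) = val a + val b) /\
  (forall a b : K, a != 0 -> b != 0 -> a + b != 0 ->
      Num.min (val a) (val b) <= val (a + b)).

Definition in_val_group (K : fieldType) (R : realDomainType) (val : K -> R)
  (n : nat) (w : 'I_n -> R) := forall i, exists c : K, c != 0 /\ val c = w i.

Definition monomial_order (n : nat) (le : rel 'X_{1..n}) :=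
  [/\ reflexive le, antisymmetric le, transitive le, total le
    & (forall m1 m2 m3, le m1 m2 -> le (m1 + m3)%MM (m2 + m3)%MM)] /\
  (forall m, le 0%MM m).

Definition degree_refining (n : nat) (le : rel 'X_{1..n}) :=
  forall m1 m2, (mdeg m1 < mdeg m2)%N -> le m1 m2.

(* total degree |f| (0 for f = 0) *)
Definition tdeg (K : fieldType) (n : nat) (p : {mpoly K[n]}) : nat := (msize p).-1.

Section Tropical.
Variables (K : fieldType) (R : realDomainType) (val : K -> R) (n : nat)
  (w : 'I_n -> R) (le1 : rel 'X_{1..n}).

Definition wdot (m : 'X_{1..n}) : R := \sum_(i < n) w i *+ m i.

Definition term_lt (t1 t2 : K * 'X_{1..n}) : bool :=
  let: (a, al) := t1 in let: (b, be) := t2 in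
  [|| (mdeg al < mdeg be)%N,
      (mdeg al == mdeg be) && (val b + wdot be < val a + wdot al)
    | [&& mdeg al == mdeg be, val a + wdot al == val b + wdot be,
          le1 al be & al != be]].

(* LM(f): the monomial of the largest term of f (for f = 0: 0%MM, never used) *)
Definition LM (p : {mpoly K[n]}) : 'X_{1..n} :=
  foldr (fun m acc => if term_lt (p@_acc, acc) (p@_m, m) then m else acc)
        (head 0%MM (msupp p)) (msupp p).

Definition LT (p : {mpoly K[n]}) : K * 'X_{1..n} := (p@_(LM p), LM p).

Definition in_ideal_gen (S : {mpoly K[n]} -> Prop) (p : {mpoly K[n]}) : Prop :=
  exists l : seq ({mpoly K[n]} * {mpoly K[n]}),
    (forall x, x \in l -> S x.2) /\ p = \sum_(x <- l) x.1 * x.2.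

Variables (lem : rel 'X_{1..n}) (s : nat) (f : 'I_s -> {mpoly K[n]}).

Definition inI (p : {mpoly K[n]}) : Prop :=
  exists a : 'I_s -> {mpoly K[n]}, p = \sum_(j < s) a j * f j.

Definition tame_syz (a : 'I_s -> {mpoly K[n]}) (i : 'I_s) : Prop :=
  [/\ \sum_(j < s) a j * f j = 0, a i != 0,
      (forall j : 'I_s, (i < j)%N -> a j = 0)
    & (forall j : 'I_s, (j < i)%N -> (tdeg (a j * f j) <= tdeg (a i * f i))%N)].

(* module monomial x^al e_i encoded as (al, i) *)
Definition LMTSyz_gen (x : 'X_{1..n} * 'I_s) : Prop :=
  exists a, tame_syz a x.2 /\ LM (a x.2) = x.1.

(* x^al e_i belongs to the submodule of A^s generated by the LM(a_i) e_i *)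
Definition in_LMTSyz (x : 'X_{1..n} * 'I_s) : Prop :=
  exists l : seq ({mpoly K[n]} * ('X_{1..n} * 'I_s)),
    (forall y, y \in l -> LMTSyz_gen y.2) /\
    forall j : 'I_s,
      (if j == x.2 then 'X_[x.1] else 0) =
      \sum_(y <- l) (if y.2.2 == j then y.1 * 'X_[y.2.1] else 0).

Definition sig_le (x y : 'X_{1..n} * 'I_s) : Prop :=
  let: (al, i) := x in let: (be, j) := y in
  (i < j)%N \/
  (i = j /\
   ((tdeg ('X_[al] * f i) < tdeg ('X_[be] * f i))%N \/
    (tdeg ('X_[al] * f i) = tdeg ('X_[be] * f i) /\
     ((~ in_LMTSyz (al, i) /\ in_LMTSyz (be, i)) \/
      (in_LMTSyz (al, i) /\ in_LMTSyz (be, i) /\ lem al be) \/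
      (~ in_LMTSyz (al, i) /\ ~ in_LMTSyz (be, i) /\ lem al be))))).

Definition sig_lt (x y : 'X_{1..n} * 'I_s) : Prop := sig_le x y /\ x <> y.

Definition in_I_le (x : 'X_{1..n} * 'I_s) (p : {mpoly K[n]}) : Prop :=
  exists l : seq (K * ('X_{1..n} * 'I_s)),
    (forall y, y \in l -> sig_le y.2 x) /\
    p = \sum_(y <- l) y.1 *: ('X_[y.2.1] * f y.2.2).

Definition is_sig (p : {mpoly K[n]}) (x : 'X_{1..n} * 'I_s) : Prop :=
  [/\ p != 0, in_I_le x p & forall y, in_I_le y p -> sig_le x y].

(* e S-reduces to g with h  (LT(0), LM(0) treated as -oo / undefined) *)
Definition S_reduces (e g h : {mpoly K[n]}) : Prop :=
  inI e /\ inI h /\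
  exists (t : 'X_{1..n}) (c : K),
    [/\ c != 0, e - c *: ('X_[t] * h) = g,
        g = 0 \/ term_lt (LT g) (LT e),
        g = 0 \/ LM g <> LM e
      & exists sh se, [/\ is_sig ('X_[t] * h) sh, is_sig e se & sig_lt sh se]].

Definition S_irreducible (e : {mpoly K[n]}) : Prop :=
  inI e /\ ~ exists h g, S_reduces e g h.

Definition tropical_S_GB (G : {mpoly K[n]} -> Prop) : Prop :=
  (forall g, G g -> inI g /\ S_irreducible g) /\
  forall h, S_irreducible h -> h != 0 ->
    exists g (t : 'X_{1..n}) sg sh,
      [/\ G g, LM ('X_[t] * g) = LM h, is_sig g sg, is_sig h sh
        & sh = ((t + sg.1)%MM, sg.2)].

End Tropical.

From Pilot Require Import Defs.
From mathcomp Require Import all_boot all_order all_algebra.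
From mathcomp Require Import mpoly.
From Stdlib Require Import Classical ClassicalEpsilon Wellfounded.
Set Implicit Arguments. Unset Strict Implicit. Unset Printing Implicit Defensive.
Import Order.TTheory GRing.Theory Num.Theory.
Local Open Scope ring_scope.

(* Every nonzero r in I has LM(r) divisible by LM(g) for some g in G; this is
   proved by well-founded induction on the signature S(r).  If r is
   S-irreducible, the S-Groebner property provides g and t with LM(t g) = LM(r).
   Otherwise r - c t h has a smaller leading term, so LM(r) = LM(t h), while
   S(t h) < S(r).  The signature order is well founded because it compares the
   index, then a degree, then membership in LM(TSyz(F)), and finally monomials
   for a degree-refining order.  The ultrametric inequality is what makes
   subtracting a polynomial with a smaller leading term keep the leading
   monomial. *)

Definition lex_measure (T : Type) (m : T -> nat) (r : T -> T -> Prop) (y x : T) :=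
  (m y < m x)%N \/ (m y = m x /\ r y x).

Lemma wf_lex_measure (T : Type) (m : T -> nat) (r : T -> T -> Prop) :
  well_founded r -> well_founded (lex_measure m r).
Proof.
move=> wf_r.
suff acc_lt k x : (m x < k)%N -> Acc (lex_measure m r) x.
  by move=> x; apply: (acc_lt (m x).+1).
elim: k x => [//|k IHk] x.
elim: (wf_r x) => {}x _ IHx mx_le.
constructor=> y [lt_my|[eq_my r_yx]]; first exact/IHk/(leq_trans lt_my).
by apply: IHx; rewrite ?eq_my.
Qed.

Lemma wf_empty_rel (T : Type) : well_founded (fun _ _ : T => False).
Proof. by move=> x; constructor. Qed.

Definition indicator (P : Prop) : nat :=
  if excluded_middle_informative P then 1%N else 0%N.

Lemma indicatorT (P : Prop) : P -> indicator P = 1%N.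
Proof. by rewrite /indicator; case: excluded_middle_informative. Qed.

Lemma indicatorF (P : Prop) : ~ P -> indicator P = 0%N.
Proof. by rewrite /indicator; case: excluded_middle_informative. Qed.

Section Valuation.
Variables (K : fieldType) (R : realDomainType) (val : K -> R).
Hypothesis val_valuation : is_valuation val.

Lemma valM a b : a != 0 -> b != 0 -> val (a * b) = val a + val b.
Proof. by case: val_valuation => valM _; apply: valM. Qed.

Lemma val1 : val 1 = 0.
Proof.
have := valM (oner_neq0 K) (oner_neq0 K); rewrite mulr1.
by move/(congr1 (fun x => x - val 1)); rewrite subrr addrK.
Qed.

Lemma valN a : a != 0 -> val (- a) = val a.
Proof.
have N1_neq0 : (-1 : K) != 0 by rewrite oppr_eq0 oner_neq0.
have valN1 : val (-1) = 0.
  have := valM N1_neq0 N1_neq0; rewrite mulrNN mulr1 val1 => /esym/eqP.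
  by rewrite -mulr2n mulrn_eq0 => /eqP.
by move=> a_neq0; rewrite -mulN1r valM // valN1 add0r.
Qed.

Lemma valD_ge a b : a != 0 -> b != 0 -> a + b != 0 ->
  (val a <= val (a + b)) || (val b <= val (a + b)).
Proof. by case: val_valuation => _ ultra a0 b0 ab0; rewrite -ge_min; apply: ultra. Qed.

Lemma valD_lt a b : a != 0 -> b != 0 -> val a < val b ->
  a + b != 0 /\ val (a + b) = val a.
Proof.
move=> a0 b0 lt_ab.
have ab0 : a + b != 0.
  by apply/negP; rewrite addr_eq0 => /eqP b_eq; move: lt_ab; rewrite b_eq valN // ltxx.
split=> //; apply/eqP; rewrite eq_le; apply/andP; split.
  have Nb0 : - b != 0 by rewrite oppr_eq0.
  have := valD_ge ab0 Nb0; rewrite addrK => /(_ a0).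
  by rewrite valN // (leNgt (val b)) lt_ab orbF.
by have /orP[//|le_b] := valD_ge a0 b0 ab0; exact: ltW (lt_le_trans lt_ab le_b).
Qed.

End Valuation.

Section TermOrder.
Variables (K : fieldType) (R : realDomainType) (val : K -> R) (n : nat)
  (w : 'I_n -> R) (le1 : rel 'X_{1..n}).
Hypotheses (val_valuation : is_valuation val) (le1_order : monomial_order le1).

Local Notation tl := (term_lt val w le1).
Local Notation LM := (LM val w le1).
Arguments term_lt : simpl never.

Definition tweight (t : K * 'X_{1..n}) := val t.1 + wdot w t.2.

Lemma term_ltE x y : tl x y = [|| (mdeg x.2 < mdeg y.2)%N,
   (mdeg x.2 == mdeg y.2) && (tweight y < tweight x) |
   [&& mdeg x.2 == mdeg y.2, tweight x == tweight y, le1 x.2 y.2 & x.2 != y.2]].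
Proof. by case: x y => [a al] [b be]. Qed.

Lemma le1_anti : antisymmetric le1. Proof. by case: le1_order => -[]. Qed.
Lemma le1_trans : transitive le1. Proof. by case: le1_order => -[]. Qed.
Lemma le1_total : total le1. Proof. by case: le1_order => -[]. Qed.
Lemma le1_add m1 m2 m3 : le1 m1 m2 -> le1 (m1 + m3)%MM (m2 + m3)%MM.
Proof. by case: le1_order => -[] _ _ _ _ le1D _; apply: le1D. Qed.

Lemma term_lt_trans x y z : tl x y -> tl y z -> tl x z.
Proof.
rewrite !term_ltE.
move=> /or3P[H1|/andP[/eqP E1 H1]|/and4P[/eqP E1 /eqP V1 L1 N1]]
       /or3P[H2|/andP[/eqP E2 H2]|/and4P[/eqP E2 /eqP V2 L2 N2]]; apply/or3P.
- by apply: Or31; apply: ltn_trans H1 H2.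
- by apply: Or31; rewrite -E2.
- by apply: Or31; rewrite -E2.
- by apply: Or31; rewrite E1.
- by apply: Or32; rewrite E1 E2 eqxx (lt_trans H2 H1).
- by apply: Or32; rewrite E1 E2 eqxx -V2 H1.
- by apply: Or31; rewrite E1.
- by apply: Or32; rewrite E1 E2 eqxx V1 H2.
- apply: Or33; rewrite E1 E2 V1 V2 !eqxx (le1_trans L1 L2) /=.
  apply/negP=> /eqP Exz; move: N1; rewrite Exz in L1 *.
  by rewrite (@le1_anti y.2 z.2) ?eqxx // L1 L2.
Qed.

Lemma term_lt_irr x : ~~ tl x x.
Proof. by rewrite term_ltE ltnn ltxx !eqxx /= andbF. Qed.

Lemma term_lt_asym x y : tl x y -> ~~ tl y x.
Proof.
by move=> lt_xy; apply/negP=> /(term_lt_trans lt_xy); rewrite (negbTE (term_lt_irr x)).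
Qed.

Lemma term_lt_total x y : x.2 != y.2 -> tl x y || tl y x.
Proof.
move=> neq_xy; rewrite !term_ltE.
case: (ltngtP (mdeg x.2) (mdeg y.2)) => [//|_|eq_deg]; first by rewrite ?orbT.
rewrite ?eq_deg ?eqxx /=.
case: (ltgtP (tweight x) (tweight y)) => [_|//|eq_wt]; first by rewrite orbT.
rewrite ?eq_wt ?eqxx /= neq_xy eq_sym neq_xy /= !andbT.
by case/orP: (le1_total x.2 y.2) => ->; rewrite ?orbT.
Qed.

Lemma term_lt_coef a b m : tl (a, m) (b, m) = (val b < val a).
Proof. by rewrite term_ltE /tweight /= !eqxx ltnn ltrD2r /= ?andbF ?orbF. Qed.

Lemma term_lt_val_eqr x a b m : val a = val b -> tl x (a, m) = tl x (b, m).
Proof. by move=> val_ab; rewrite !term_ltE /tweight /= val_ab. Qed.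

Lemma term_lt_val_lel a b m y : tl (a, m) y -> val a <= val b -> tl (b, m) y.
Proof.
rewrite !term_ltE /tweight /=.
move=> /or3P[->//|/andP[-> lt_v]|/and4P[-> /eqP eq_v le_m neq_m]] le_ab.
  by rewrite (lt_le_trans lt_v) ?orbT // lerD2r.
move: le_ab; rewrite le_eqVlt => /orP[/eqP eq_ab|lt_ab].
  by rewrite -eq_ab eq_v eqxx le_m neq_m /= !orbT.
by rewrite -eq_v ltrD2r lt_ab orbT.
Qed.

Lemma term_ltZ c a b m m' : c != 0 -> a != 0 -> b != 0 ->
  tl (a, m) (b, m') -> tl (c * a, m) (c * b, m').
Proof.
move=> c0 a0 b0; rewrite !term_ltE /tweight /= !(valM val_valuation) // -!addrA.
by rewrite ltrD2l (inj_eq (addrI _)).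
Qed.

Lemma wdotD m1 m2 : wdot w (m1 + m2)%MM = wdot w m1 + wdot w m2.
Proof.
by rewrite /wdot -big_split; apply: eq_bigr => i _; rewrite mnmDE mulrnDr.
Qed.

Lemma term_ltD t a b m m' : tl (a, m) (b, m') -> tl (a, (t + m)%MM) (b, (t + m')%MM).
Proof.
rewrite !term_ltE /tweight /= !mdegD !wdotD ltn_add2l eqn_add2l eqm_add2l.
rewrite (addrCA (val a)) (addrCA (val b)) ltrD2l (inj_eq (addrI _)).
case/or3P=> [->//|->|/and4P[-> -> le_m ->]]; first by rewrite orbT.
by rewrite ![(t + _)%MM]addmC le1_add // !orbT.
Qed.

Definition is_LM (p : {mpoly K[n]}) M :=
  M \in msupp p /\ forall m, m \in msupp p -> m != M -> tl (p@_m, m) (p@_M, M).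

Lemma foldr_max_spec (p : {mpoly K[n]}) ms m0 :
  let r := foldr (fun m acc => if tl (p@_acc, acc) (p@_m, m) then m else acc) m0 ms in
  r \in m0 :: ms /\ forall m, m \in m0 :: ms -> m != r -> tl (p@_m, m) (p@_r, r).
Proof.
elim: ms => [|m ms [r_in r_max]] /=.
  by split; [rewrite mem_seq1 | move=> m; rewrite mem_seq1 => /eqP -> /eqP].
set r := foldr _ _ _ in r_in r_max *; case: ifP => lt_rm.
  split; first by rewrite !inE eqxx orbT.
  move=> m' m'_in neq_m'; case: (eqVneq m' r) => [->//|neq_r].
  have {}m'_in : m' \in m0 :: ms.
    by move: m'_in neq_m'; rewrite !inE => /or3P[->|/eqP->|->]; rewrite ?eqxx ?orbT.
  exact: term_lt_trans (r_max _ m'_in neq_r) lt_rm.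
split; first by move: r_in; rewrite !inE => /orP[->|->]; rewrite ?orbT.
move=> m'; rewrite !inE => /or3P[m'_eq|/eqP->|m'_in] neq_r.
- by apply: r_max; rewrite ?inE ?m'_eq.
- by have := @term_lt_total (p@_m, m) (p@_r, r) neq_r; rewrite lt_rm orbF.
- by apply: r_max; rewrite ?inE ?m'_in ?orbT.
Qed.

Lemma is_LM_LM p : p != 0 -> is_LM p (LM p).
Proof.
rewrite -msupp_eq0 /Defs.LM /is_LM; case: (msupp p) => [//|m0 ms] _.
have [LM_in LM_max] := foldr_max_spec p (m0 :: ms) m0.
split; first by move: LM_in; rewrite !inE orbA orbb.
by move=> m m_in; apply: LM_max; rewrite inE m_in orbT.
Qed.

Lemma is_LM_eq p M : is_LM p M -> LM p = M.
Proof.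
move=> [M_in M_max].
have p0 : p != 0 by rewrite -msupp_eq0; move: M_in; case: (msupp p).
have [LM_in LM_max] := is_LM_LM p0.
apply/eqP; apply/negP => /negP neq_LM.
have /term_lt_asym := M_max _ LM_in neq_LM.
by rewrite LM_max // eq_sym.
Qed.

Lemma LMZ c p : c != 0 -> p != 0 -> LM (c *: p) = LM p.
Proof.
move=> c0 p0; have [LM_in LM_max] := is_LM_LM p0.
have supp_eq := perm_mem (msuppZ p c0).
apply: is_LM_eq; split; first by rewrite supp_eq.
move=> m; rewrite supp_eq => m_in neq_m; rewrite !mcoeffZ.
by apply: term_ltZ; rewrite -?mcoeff_msupp //; exact: LM_max.
Qed.

Lemma LM_mulX t p : p != 0 -> LM ('X_[t] * p) = (t + LM p)%MM.
Proof.
move=> p0; have [LM_in LM_max] := is_LM_LM p0.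
have supp_eq := perm_mem (msuppMX p t); rewrite mulrC.
apply: is_LM_eq; split; first by rewrite supp_eq map_f.
move=> m'; rewrite supp_eq => /mapP[m m_in ->]; rewrite eqm_add2l => neq_m.
by rewrite !mcoeffMX; apply/term_ltD/LM_max.
Qed.

Lemma LMB_lt r g : r != 0 -> g != 0 -> tl (LT val w le1 g) (LT val w le1 r) ->
  LM (r - g) = LM r.
Proof.
rewrite /LT => r0 g0 lt_gr.
set M := LM r in lt_gr *; have [r_M r_max] := is_LM_LM r0.
have [g_LM g_max] := is_LM_LM g0.
have g_lt m : m \in msupp g -> tl (g@_m, m) (r@_M, M).
  move=> m_in; case: (eqVneq m (LM g)) => [->//|neq_m].
  exact: term_lt_trans (g_max _ m_in neq_m) lt_gr.
have rM0 : r@_M != 0 by rewrite -mcoeff_msupp.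
(* the coefficient of M survives: if g has one, it is of strictly larger valuation *)
have [rgM0 val_rgM] : (r - g)@_M != 0 /\ val (r - g)@_M = val r@_M.
  rewrite mcoeffB; case: (eqVneq g@_M 0) => [->|gM0]; first by rewrite subr0.
  have := g_lt M; rewrite mcoeff_msupp term_lt_coef => /(_ gM0) lt_v.
  by apply: valD_lt; rewrite ?oppr_eq0 ?(valN val_valuation).
apply: is_LM_eq; split; first by rewrite mcoeff_msupp.
move=> m; rewrite (term_lt_val_eqr _ _ val_rgM) mcoeff_msupp mcoeffB => rg_m neq_m.
have r_lt : r@_m != 0 -> tl (r@_m, m) (r@_M, M).
  by move=> rm0; apply: r_max; rewrite ?mcoeff_msupp.
have Ng_lt : g@_m != 0 -> tl (- g@_m, m) (r@_M, M).
  by move=> gm0; apply: term_lt_val_lel (g_lt _ _) _; rewrite ?mcoeff_msupp ?(valN val_valuation).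
case: (eqVneq r@_m 0) => [rm_eq|rm0].
  by move: rg_m; rewrite rm_eq sub0r oppr_eq0 => /Ng_lt.
case: (eqVneq g@_m 0) => [->|gm0]; first by rewrite subr0; exact: r_lt.
have := valD_ge val_valuation rm0 _ rg_m; rewrite oppr_eq0 => /(_ gm0) /orP[le_r|le_g].
  exact: term_lt_val_lel (r_lt rm0) le_r.
exact: term_lt_val_lel (Ng_lt gm0) le_g.
Qed.

End TermOrder.

Section DegreeRefiningOrder.
Variables (n : nat) (lem : rel 'X_{1..n}).
Hypotheses (lem_order : monomial_order lem) (lem_degree : degree_refining lem).

Lemma lem_anti : antisymmetric lem. Proof. by case: lem_order => -[]. Qed.
Lemma lem_trans : transitive lem. Proof. by case: lem_order => -[]. Qed.

Definition lem_rank d (m : 'X_{1..n}) :=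
  #|[set b : 'X_{1..n < d.+1} | lem (bmnm b) m && (bmnm b != m)]|.

Lemma lem_rank_lt d y x : lem y x -> y != x -> mdeg y = d ->
  (lem_rank d y < lem_rank d x)%N.
Proof.
move=> le_yx neq_yx deg_y; apply: proper_card; apply/properP; split.
  apply/subsetP => b; rewrite !inE => /andP[le_by neq_by].
  rewrite (lem_trans le_by le_yx) /=; apply: contraNneq neq_yx => eq_bx.
  by rewrite -eq_bx in le_yx *; rewrite (@lem_anti (bmnm b) y) // le_by le_yx.
have y_bnd : (mdeg y < d.+1)%N by rewrite deg_y.
by exists (BMultinom y_bnd); rewrite !inE /= ?le_yx ?neq_yx ?eqxx ?andbF.
Qed.

Lemma lem_lt_deg y x : lem y x -> y != x -> (mdeg y <= mdeg x)%N.
Proof.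
move=> le_yx neq_yx; rewrite leqNgt; apply: contraNN neq_yx => /lem_degree le_xy.
by rewrite (@lem_anti y x) // le_yx le_xy.
Qed.

Lemma wf_lem_lt : well_founded (fun y x => lem y x && (y != x)).
Proof.
apply: (Inclusion.wf_incl _ _ _ _
  (wf_lex_measure mdeg (wf_lex_measure (fun m => lem_rank (mdeg m) m) (@wf_empty_rel _)))).
move=> y x /andP[le_yx neq_yx].
case: (ltngtP (mdeg y) (mdeg x)) => [lt_deg|lt_deg|eq_deg]; first by left.
  by move: (lem_lt_deg le_yx neq_yx); rewrite leqNgt lt_deg.
by right; split=> //; left; rewrite {1}eq_deg; apply: lem_rank_lt.
Qed.

End DegreeRefiningOrder.

Section Signatures.
Variables (K : fieldType) (R : realDomainType) (val : K -> R) (n : nat)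
  (w : 'I_n -> R) (le1 lem : rel 'X_{1..n}) (s : nat) (f : 'I_s -> {mpoly K[n]}).
Hypotheses (lem_order : monomial_order lem) (lem_degree : degree_refining lem).

Local Notation sig_le := (sig_le val w le1 lem f).
Local Notation sig_lt := (sig_lt val w le1 lem f).
Local Notation is_sig := (is_sig val w le1 lem f).

Lemma sig_le_anti x y : sig_le x y -> sig_le y x -> x = y.
Proof.
case: x y => [al i] [be j] /=.
move=> [lt_ij|[eq_ij le_xy]] [lt_ji|[eq_ji le_yx]].
- by move: (ltn_trans lt_ij lt_ji); rewrite ltnn.
- by move: lt_ij; rewrite eq_ji ltnn.
- by move: lt_ji; rewrite eq_ij ltnn.
- subst j; case: le_xy => [lt_xy|[eq_xy le_xy]]; case: le_yx => [lt_yx|[eq_yx le_yx]].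
  + by move: (ltn_trans lt_xy lt_yx); rewrite ltnn.
  + by move: lt_xy; rewrite eq_yx ltnn.
  + by move: lt_yx; rewrite eq_xy ltnn.
  + have [lem_ab lem_ba] : lem al be /\ lem be al by tauto.
    by rewrite (@lem_anti _ _ lem_order al be) // lem_ab lem_ba.
Qed.

Lemma sig_lt_lex y x : sig_lt y x ->
  lex_measure (fun x => nat_of_ord x.2)
  (lex_measure (fun x => tdeg ('X_[x.1] * f x.2))
  (lex_measure (fun x => indicator (in_LMTSyz val w le1 f x))
  (fun y x => lem y.1 x.1 && (y.1 != x.1)))) y x.
Proof.
case: y x => [be j] [al i] [/= le_yx neq_yx].
case: le_yx => [lt_ji|[eq_ji le_yx]]; first by left.
subst j; right; split=> //.
case: le_yx => [lt_deg|[eq_deg le_yx]]; first by left.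
right; split=> //.
have neq_ba : be != al by apply: contra_not_neq neq_yx => ->.
case: le_yx => [[Nin_y in_x]|[[in_y [in_x le_ba]]|[Nin_y [Nin_x le_ba]]]].
- by left; rewrite indicatorF // indicatorT.
- by right; split; [rewrite !indicatorT | apply/andP].
- by right; split; [rewrite !indicatorF | apply/andP].
Qed.

Lemma wf_sig_lt : well_founded sig_lt.
Proof.
apply: (Inclusion.wf_incl _ _ _ sig_lt_lex).
do 3 apply: wf_lex_measure.
exact: (Inverse_Image.wf_inverse_image _ _ _ fst (wf_lem_lt lem_order lem_degree)).
Qed.

Lemma is_sig_uniq p x y : is_sig p x -> is_sig p y -> x = y.
Proof. by move=> [_ px x_min] [_ py y_min]; apply: sig_le_anti; [apply: x_min | apply: y_min]. Qed.

Definition sig_prec (q p : {mpoly K[n]}) :=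
  exists sq sp, [/\ is_sig q sq, is_sig p sp & sig_lt sq sp].

Lemma wf_sig_prec : well_founded sig_prec.
Proof.
move=> p; case: (classic (exists x, is_sig p x)) => [[x sig_p]|no_sig]; last first.
  by constructor=> q [sq [sp [_ sig_p _]]]; case: no_sig; exists sp.
elim/(well_founded_ind wf_sig_lt): x p sig_p => x IHx p sig_p.
constructor=> q [sq [sp [sig_q sig_p' lt_qp]]].
by apply: IHx sig_q; rewrite (is_sig_uniq sig_p sig_p').
Qed.

End Signatures.

Section LeadingMonomials.
Variables (K : fieldType) (R : realDomainType) (val : K -> R) (n : nat)
  (w : 'I_n -> R) (le1 lem : rel 'X_{1..n}) (s : nat) (f : 'I_s -> {mpoly K[n]})
  (G : {mpoly K[n]} -> Prop).
Hypotheses (val_valuation : is_valuation val) (le1_order : monomial_order le1)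
  (lem_order : monomial_order lem) (lem_degree : degree_refining lem).
Hypothesis G_SGB : tropical_S_GB val w le1 lem f G.

Local Notation LM := (LM val w le1).

Lemma inI_mulX t p : inI f p -> inI f ('X_[t] * p).
Proof.
case=> a ->; exists (fun j => 'X_[t] * a j); rewrite mulr_sumr.
by apply: eq_bigr => j _; rewrite mulrA.
Qed.

Lemma S_reduces_LM e g h : S_reduces val w le1 lem f e g h ->
  exists t, [/\ inI f ('X_[t] * h), 'X_[t] * h != 0,
    LM e = LM ('X_[t] * h) & sig_prec val w le1 lem f ('X_[t] * h) e].
Proof.
case=> _ [I_h [t [c [c0 g_eq lt_ge _ [sth [se [sig_th sig_e lt_sig]]]]]]].
have th0 : 'X_[t] * h != 0 by case: sig_th.
have e0 : e != 0 by case: sig_e.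
exists t; split; [exact: inI_mulX | by [] | | by exists sth, se].
have e_sub : e - g = c *: ('X_[t] * h) by rewrite -g_eq opprB addrC subrK.
rewrite -(LMZ w val_valuation le1_order c0 th0) -e_sub.
case: lt_ge => [->|lt_ge]; first by rewrite subr0.
case: (eqVneq g 0) => [->|g0]; first by rewrite subr0.
by rewrite (LMB_lt val_valuation le1_order e0 g0 lt_ge).
Qed.

Lemma LM_dvd_LMG p : inI f p -> p != 0 ->
  exists g u, [/\ G g, g != 0 & LM p = (u + LM g)%MM].
Proof.
elim/(well_founded_ind (wf_sig_prec val w le1 f lem_order lem_degree)): p => p IHp I_p p0.
case: (classic (exists h g, S_reduces val w le1 lem f p g h)) => [[h [g red]]|irr].
  by have [t [I_th th0 -> prec]] := S_reduces_LM red; apply: IHp.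
case: G_SGB => _ /(_ p (conj I_p irr) p0) [g [t [sg [sp [Gg LM_tg sig_g _ _]]]]].
have g0 : g != 0 by case: sig_g.
by exists g, t; rewrite -LM_tg (LM_mulX val w le1_order).
Qed.

End LeadingMonomials.

Section GeneratedIdeal.
Variables (K : fieldType) (n : nat).
Implicit Types (S T : {mpoly K[n]} -> Prop) (p q : {mpoly K[n]}).

Lemma in_ideal_genD S p q :
  in_ideal_gen S p -> in_ideal_gen S q -> in_ideal_gen S (p + q).
Proof.
case=> l1 [S_l1 ->] [l2 [S_l2 ->]]; exists (l1 ++ l2); rewrite big_cat.
by split=> // x; rewrite mem_cat => /orP[/S_l1|/S_l2].
Qed.

Lemma in_ideal_genMl S c p : in_ideal_gen S p -> in_ideal_gen S (c * p).
Proof.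
case=> l [S_l ->]; exists [seq (c * y.1, y.2) | y <- l].
rewrite big_map mulr_sumr; split; last by apply: eq_bigr => y _; rewrite mulrA.
by move=> x /mapP[y y_in ->] /=; apply: S_l.
Qed.

Lemma in_ideal_gen_sub S T p :
  (forall q, T q -> in_ideal_gen S q) -> in_ideal_gen T p -> in_ideal_gen S p.
Proof.
move=> T_S [l [T_l ->]]; elim: l T_l => [|x l IHl] T_l; first by exists [::].
rewrite big_cons; apply: in_ideal_genD; last by apply: IHl => y y_in; apply/T_l/mem_behead.
by apply: in_ideal_genMl; apply: T_S; apply: T_l; rewrite mem_head.
Qed.

End GeneratedIdeal.

Theorem mainTheorem2 (K : fieldType) (R : realDomainType) (val : K -> R)
  (n : nat) (w : 'I_n -> R) (le1 lem : rel 'X_{1..n})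
  (s : nat) (f : 'I_s -> {mpoly K[n]}) (G : {mpoly K[n]} -> Prop) :
  is_valuation val ->
  in_val_group val w ->
  monomial_order le1 ->
  monomial_order lem -> degree_refining lem ->
  (forall i j : 'I_s, (i <= j)%N -> (tdeg (f i) <= tdeg (f j))%N) ->
  tropical_S_GB val w le1 lem f G ->
  forall p : {mpoly K[n]},
    in_ideal_gen (fun q => exists g, [/\ G g, g != 0 & q = 'X_[LM val w le1 g]]) p <->
    in_ideal_gen (fun q => exists r, [/\ inI f r, r != 0 & q = 'X_[LM val w le1 r]]) p.
Proof.
(* Neither [w] lying in the value group nor the degree ordering of the [f i] is needed. *)
move=> val_valuation _ le1_order lem_order lem_degree _ G_SGB p; split.
  apply: in_ideal_gen_sub => _ [g [Gg g0 ->]].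
  exists [:: (1, 'X_[LM val w le1 g])]; rewrite big_seq1 mul1r; split=> // x.
  rewrite mem_seq1 => /eqP -> /=; exists g; split=> //.
  by case: G_SGB => /(_ g Gg) [].
apply: in_ideal_gen_sub => _ [r [I_r r0 ->]].
have [g [u [Gg g0 ->]]] :=
  LM_dvd_LMG val_valuation le1_order lem_order lem_degree G_SGB I_r r0.
exists [:: ('X_[u], 'X_[LM val w le1 g])]; rewrite big_seq1 mpolyXD; split=> // x.
by rewrite mem_seq1 => /eqP -> /=; exists g.
Qed.
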